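(* Let $f:\mathbb{R}^n\to\mathbb{R}$ be convex, differentiable and bounded from below, with $\nabla f$ being $L$-Lipschitz continuous ($L>0$), let $\lambda>0$, and let $H(x)=f(x)+\lambda\|x\|_0$. Let $\{x_k\},\{y_k\}$ be generated by the VMEPIHT method described in the context. Then: (1) the sequence $\{H(x_k)\}$ is non-increasing; (2) $\sum_{k=1}^\infty\|x_k-y_k\|^2<\infty$, and in particular $\|x_k-y_k\|\to 0$; (3) the index set $I(x_k)$ changes only finitely often, i.e. there is $K$ such that $I(x_k)=I(x_K)$ for all $k\geq K$.
   Context: $\|x\|_0$ denotes the number of nonzero components of $x\in\mathbb{R}^n$. For $x\in\mathbb{R}^n$, $I(x):=\{i: x_i=0\}$. For an index set $I\subseteq\{1,\dots,n\}$, $C_I:=\{x\in\mathbb{R}^n: x_i=0 \text{ for all } i\in I\}$, and $P_C(x)=\arg\min_{z\in C}\frac12\|z-x\|^2$ is the Euclidean projection onto $C$. VMEPIHT method: fix parameters $\mu>0$, $\lambda>0$ and a starting point $y_0\in\mathbb{R}^n$. For $k=0,1,2,\dots$: choose $x_k\in\arg\min_{x\in\mathbb{R}^n}\ \lambda\|x\|_0+\frac{L}{2}\|x-y_k+\frac1L\nabla f(y_k)\|^2+\frac{\mu}{2}\|x-y_k\|^2$; then choose a symmetric positive definite matrix $H_k$ and a step length $\alpha_k\ge 0$, and set $y_{k+1}=P_{C_{I(x_k)}}(x_k-\alpha_kH_k\nabla f(x_k))$, where $\alpha_k$ is chosen so that $f(y_{k+1})\leq f(x_k)$. *)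

From HB Require Import structures.
From mathcomp Require Import all_boot all_order all_algebra.
From mathcomp Require Import all_classical all_reals all_analysis.
Set Implicit Arguments. Unset Strict Implicit. Unset Printing Implicit Defensive.
Import Order.TTheory GRing.Theory Num.Theory.
Import numFieldNormedType.Exports.
Local Open Scope ring_scope.

Section VMEPIHT.
Variables (R : realType) (n : nat).
Notation vec := 'rV[R]_n.

Definition dotv (u v : vec) : R := \sum_(i < n) u 0 i * v 0 i.
Definition nsq (u : vec) : R := dotv u u.
Definition enorm (u : vec) : R := Num.sqrt (nsq u).

Definition norm0 (x : vec) : nat := #|[set i : 'I_n | x 0 i != 0]|.

Definition Iset (x : vec) : {set 'I_n} := [set i : 'I_n | x 0 i == 0].

Definition C_I (I : {set 'I_n}) : set vec := [set x | forall i, i \in I -> x 0 i = 0].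

Definition is_proj (C : set vec) (x z : vec) : Prop :=
  C z /\ forall w, C w -> nsq (z - x) / 2 <= nsq (w - x) / 2.

Definition convex_fun (f : vec -> R) : Prop :=
  forall (x y : vec) (t : R), 0 <= t -> t <= 1 ->
    f (t *: x + (1 - t) *: y) <= t * f x + (1 - t) * f y.

Definition is_gradient (f : vec -> R) (g : vec -> vec) : Prop :=
  forall x, differentiable f x /\ forall h, 'd f x h = dotv (g x) h.

Definition lipschitz_with (g : vec -> vec) (L : R) : Prop :=
  forall x y, enorm (g x - g y) <= L * enorm (x - y).

Definition sym_posdef (H : 'M[R]_n) : Prop :=
  H^T = H /\ forall v : vec, v != 0 -> 0 < (v *m H *m v^T) 0 0.

Definition xobj (f : vec -> R) (g : vec -> vec) (L mu lam : R) (y x : vec) : R :=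
  lam * (norm0 x)%:R + L / 2 * nsq (x - y + L^-1 *: g y) + mu / 2 * nsq (x - y).

Definition Hobj (f : vec -> R) (lam : R) (x : vec) : R := f x + lam * (norm0 x)%:R.

Definition VMEPIHT (f : vec -> R) (g : vec -> vec) (L mu lam : R)
  (x y : nat -> vec) (Hm : nat -> 'M[R]_n) (alpha : nat -> R) : Prop :=
  forall k,
    (forall z, xobj f g L mu lam (y k) (x k) <= xobj f g L mu lam (y k) z) /\
    sym_posdef (Hm k) /\ 0 <= alpha k /\
    is_proj (C_I (Iset (x k))) (x k - alpha k *: (g (x k) *m Hm k)) (y k.+1) /\
    f (y k.+1) <= f (x k).

End VMEPIHT.

(* Each iteration decreases H by a multiple of |x_(k+1) - y_(k+1)|^2: x_(k+1)
   does at least as well as y_(k+1) in the prox objective, the descent lemma for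
   the L-smooth f converts this into H (x_(k+1)) + mu/2 |x_(k+1) - y_(k+1)|^2
   <= f (y_(k+1)) + lam |y_(k+1)|_0, and y_(k+1) = P_C (...) has no more nonzero
   entries than x_k and does not increase f.  Telescoping against the lower bound
   of H gives (1) and (2).
   For (3), every nonzero entry of a minimizer of the prox objective has square at
   least lam / (L + mu), by comparison with zeroing or doubling that entry.  Once
   |x_(k+1) - y_(k+1)| is below this threshold, a zero of x_k, which y_(k+1) shares,
   remains a zero of x_(k+1); so the zero sets form an eventually increasing chain
   in a finite set, which stabilizes. *)

From HB Require Import structures.
From mathcomp Require Import all_boot all_order all_algebra.
From mathcomp Require Import all_classical all_reals all_analysis.
From mathcomp Require Import ring lra.
Import Order.TTheory GRing.Theory Num.Theory.
Import numFieldNormedType.Exports.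
Local Open Scope classical_set_scope.
Local Open Scope ring_scope.

Section EuclideanRowVectors.
Context {R : realType} {n : nat}.
Implicit Types (u v w x z : 'rV[R]_n) (c s : R) (i : 'I_n).

Lemma dotvC u v : dotv u v = dotv v u.
Proof. by apply: eq_bigr => i _; rewrite mulrC. Qed.

Lemma dotvDl u v w : dotv (u + v) w = dotv u w + dotv v w.
Proof. by rewrite /dotv -big_split; apply: eq_bigr => i _; rewrite mxE mulrDl. Qed.

Lemma dotvZl c u w : dotv (c *: u) w = c * dotv u w.
Proof. by rewrite /dotv mulr_sumr; apply: eq_bigr => i _; rewrite mxE mulrA. Qed.

Lemma dotvBl u v w : dotv (u - v) w = dotv u w - dotv v w.
Proof. by rewrite dotvDl -scaleN1r dotvZl mulN1r. Qed.

Lemma dotvDr u v w : dotv w (u + v) = dotv w u + dotv w v.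
Proof. by rewrite dotvC dotvDl !(dotvC w). Qed.

Lemma dotvZr c u w : dotv w (c *: u) = c * dotv w u.
Proof. by rewrite dotvC dotvZl dotvC. Qed.

Lemma dotv_delta u i : dotv u (delta_mx 0 i) = u 0 i.
Proof.
rewrite /dotv (bigD1 i) //= big1 ?addr0; first by rewrite mxE !eqxx mulr1.
by move=> j /negPf ji; rewrite mxE ji andbF mulr0.
Qed.

Lemma nsq_ge0 u : 0 <= nsq u.
Proof. by apply: sumr_ge0 => i _; rewrite -expr2 sqr_ge0. Qed.

Lemma nsq0 : nsq (0 : 'rV[R]_n) = 0.
Proof. by apply: big1 => i _; rewrite mxE mul0r. Qed.

Lemma nsqD u v : nsq (u + v) = nsq u + 2 * dotv u v + nsq v.
Proof. rewrite /nsq dotvDl !dotvDr (dotvC v u); ring. Qed.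

Lemma nsqZ c u : nsq (c *: u) = c ^+ 2 * nsq u.
Proof. by rewrite /nsq dotvZl dotvZr mulrA expr2. Qed.

Lemma nsqD_delta u i c : nsq (u + c *: delta_mx 0 i) = nsq u + 2 * c * u 0 i + c ^+ 2.
Proof.
rewrite nsqD nsqZ dotvZr dotv_delta /nsq dotv_delta mxE !eqxx mulr1; ring.
Qed.

Lemma enorm_ge0 u : 0 <= enorm u.
Proof. exact: sqrtr_ge0. Qed.

Lemma sqr_enorm u : enorm u ^+ 2 = nsq u.
Proof. by rewrite sqr_sqrtr // nsq_ge0. Qed.

Lemma enormZ c u : enorm (c *: u) = `|c| * enorm u.
Proof. by rewrite /enorm nsqZ sqrtrM ?sqr_ge0 // sqrtr_sqr. Qed.

Lemma abs_entry_le_enorm u i : `|u 0 i| <= enorm u.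
Proof.
rewrite -sqrtr_sqr /enorm ler_sqrt; last exact: nsq_ge0.
rewrite /nsq /dotv (bigD1 i) //= -expr2 lerDl.
by apply: sumr_ge0 => j _; rewrite -expr2 sqr_ge0.
Qed.

Lemma dotv_le_of_enorm_le u d s : 0 < s -> enorm u <= s * enorm d ->
  dotv u d <= s * nsq d.
Proof.
move=> s_gt0 le_ud.
have nsq_le : nsq u <= s ^+ 2 * nsq d.
  rewrite -!sqr_enorm -exprMn ler_pXn2r // nnegrE ?enorm_ge0 //.
  by rewrite mulr_ge0 ?enorm_ge0 ?ltW.
have := nsq_ge0 (u + (- s) *: d); rewrite nsqD nsqZ dotvZr sqrrN => ge0.
have : s * dotv u d <= s * (s * nsq d) by nra.
by rewrite ler_pM2l.
Qed.

Lemma norm0_le_of_C_I x z : C_I (Iset x) z -> (norm0 z <= norm0 x)%N.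
Proof.
move=> zC; apply: subset_leq_card; apply/fintype.subsetP => i; rewrite !inE.
by apply: contra => /eqP xi0; apply/eqP; apply: zC; rewrite inE xi0.
Qed.

Lemma norm0_drop_entry x i : x 0 i != 0 ->
  (norm0 (x + (- x 0 i) *: delta_mx 0 i)).+1 = norm0 x.
Proof.
move=> xi0; rewrite /norm0 [in RHS](cardsD1 i) inE xi0 add1n; congr _.+1.
apply: eq_card => j; rewrite !inE !mxE eqxx mulr_natr.
by case: (eqVneq j i) => [->|_]; rewrite ?addrN ?eqxx ?addr0.
Qed.

Lemma norm0_double_entry x i : norm0 (x + x 0 i *: delta_mx 0 i) = norm0 x.
Proof.
rewrite /norm0; apply: eq_card => j; rewrite !inE !mxE eqxx mulr_natr.
case: (eqVneq j i) => [->|_]; last by rewrite addr0.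
by rewrite -mulr2n mulrn_eq0.
Qed.

End EuclideanRowVectors.

Section LipschitzGradient.
Context {R : realType} {n : nat} {f : 'rV[R]_n -> R} {g : 'rV[R]_n -> 'rV[R]_n}.
Hypothesis f_grad : is_gradient f g.

Lemma is_derive_line (y d : 'rV[R]_n) (t : R) :
  is_derive t 1 (fun s => f (y + s *: d)) (dotv (g (y + t *: d)) d).
Proof.
have [df dfE] := f_grad (y + t *: d).
have quotE : (fun h : R => h^-1 *: (f (y + (h *: 1 + t) *: d) - f (y + t *: d)))
    = (fun h : R => h^-1 *: (f (h *: d + (y + t *: d)) - f (y + t *: d))).
  apply/funext => h; congr (_ *: (f _ - _)).
  by rewrite [h *: 1]mulr1 scalerDl addrCA addrC.
split; first by rewrite /derivable quotE; exact: diff_derivable.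
by rewrite /derive quotE -/(derive f (y + t *: d) d) deriveE // dfE.
Qed.

(* Mean value theorem for [s |-> f (y + s d) - s <g y, d> - s^2 L/2 |d|^2],
   whose derivative is nonpositive on [0, 1] by the Lipschitz bound. *)
Lemma descent_lemma {L : R} : 0 < L -> lipschitz_with g L ->
  forall x y, f x <= f y + dotv (g y) (x - y) + L / 2 * nsq (x - y).
Proof.
move=> L_gt0 g_lip x y; set d := x - y.
set a := dotv (g y) d; set b := L / 2 * nsq d.
pose psi := (fun s => f (y + s *: d)) - a \*: id - b \*: (id * id).
have psi_der (t : R) : is_derive t 1 psi (dotv (g (y + t *: d)) d - a - b * (t + t)).
  have id_der := is_derive_id t (1 : R).
  have := is_deriveB (is_deriveB (is_derive_line y d t) (is_deriveZ a id_der))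
    (is_deriveZ b (is_deriveM id_der id_der)).
  by move/is_derive_eq; apply; rewrite /GRing.scale /= !mulr1.
have psi_cont : {within `[0, 1], continuous psi}.
  apply: continuous_subspaceT => t; apply: differentiable_continuous.
  by apply/derivable1_diffP; have [] := psi_der t.
have [c /[!in_itv] /= /andP[c_gt0 _]] := MVT ltr01 (fun t _ => psi_der t) psi_cont.
have slope_le : dotv (g (y + c *: d)) d - a <= b * (c + c).
  rewrite /a -dotvBl /b (_ : _ * (c + c) = (L * c) * nsq d); last by field.
  apply: dotv_le_of_enorm_le; first exact: mulr_gt0.
  by apply: le_trans (g_lip _ _) _; rewrite addrC addKr enormZ gtr0_norm // mulrA.
have yd_eq : y + d = x by rewrite /d addrC subrK.
rewrite /psi !fctE /= !scale0r !scaler0 addr0 scale1r yd_eq.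
rewrite /GRing.scale /= !mulr1 !mulr0 !subr0.
nra.
Qed.

End LipschitzGradient.

Section HardThresholdingStep.
Context {R : realType} {n : nat} {f : 'rV[R]_n -> R} {g : 'rV[R]_n -> 'rV[R]_n}.
Context {L mu lam : R}.
Hypotheses (L_gt0 : 0 < L) (mu_gt0 : 0 < mu).
Local Notation xobj := (xobj f g L mu lam).

Lemma xobj_subr_center y z : xobj y z - xobj y y =
  lam * ((norm0 z)%:R - (norm0 y)%:R) + dotv (g y) (z - y) + (L + mu) / 2 * nsq (z - y).
Proof.
rewrite /xobj subrr add0r nsq0 mulr0 addr0 nsqD nsqZ dotvZr dotvC.
by field; rewrite gt_eqF.
Qed.

Lemma xobj_add_delta y x i c : xobj y (x + c *: delta_mx 0 i) - xobj y x =
  lam * ((norm0 (x + c *: delta_mx 0 i))%:R - (norm0 x)%:R)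
  + c * (g y 0 i + (L + mu) * (x - y) 0 i) + (L + mu) / 2 * c ^+ 2.
Proof.
set z := x + c *: delta_mx 0 i.
rewrite (_ : xobj y z - _ = (xobj y z - xobj y y) - (xobj y x - xobj y y)); last by ring.
rewrite !xobj_subr_center /z (addrAC x) nsqD_delta (dotvDr (x - y)) dotvZr dotv_delta.
by field.
Qed.

Lemma xobj_argmin_entry_sqr_ge y x i : (forall z, xobj y x <= xobj y z) ->
  x 0 i != 0 -> lam / (L + mu) <= x 0 i ^+ 2.
Proof.
move=> x_min xi_neq0.
have := x_min (x + (- x 0 i) *: delta_mx 0 i); rewrite -subr_ge0 xobj_add_delta.
rewrite -(norm0_drop_entry x i xi_neq0) -natr1 => drop_ge.
have := x_min (x + x 0 i *: delta_mx 0 i); rewrite -subr_ge0 xobj_add_delta.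
rewrite norm0_double_entry subrr mulr0 add0r => double_ge.
rewrite ler_pdivrMr ?addr_gt0 //; nra.
Qed.

End HardThresholdingStep.

Section TelescopingSeries.
Context {R : realType}.
Implicit Types (u h : nat -> R) (m B : R).

Lemma telescoping_partial_sums_le u h m :
  (forall k, u k.+1 <= h k - h k.+1) -> (forall k, m <= h k) ->
  forall N, \sum_(1 <= k < N) u k <= h 0%N - m.
Proof.
move=> u_le h_ge.
have tele N : \sum_(1 <= k < N.+1) u k <= h 0%N - h N.
  elim: N => [|N IH]; first by rewrite big_geq // subrr.
  by rewrite big_nat_recr //=; have := u_le N; lra.
case=> [|N]; first by rewrite big_geq // subr_ge0.
by apply: le_trans (tele N) _; rewrite lerD2l lerN2.
Qed.

Lemma nneseries_lty_of_partial_sums_le u B : (forall k, 0 <= u k) ->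
  (forall N, \sum_(1 <= k < N) u k <= B) -> (\sum_(1 <= k <oo) (u k)%:E < +oo)%E.
Proof.
move=> u_ge0 u_sum; apply: (@le_lt_trans _ _ B%:E); last exact: ltry.
apply: lime_le; first by apply: is_cvg_nneseries => k _ _; rewrite lee_fin.
by apply: nearW => N; rewrite sumEFin lee_fin.
Qed.

Lemma cvg0_of_partial_sums_le u B : (forall k, 0 <= u k) ->
  (forall N, \sum_(1 <= k < N) u k <= B) -> u @ \oo --> 0.
Proof.
move=> u_ge0 u_sum; rewrite -cvg_shiftS; apply: cvg_series_cvg_0.
apply: nondecreasing_is_cvgn; first by apply: nondecreasing_series => k _ _; exact: u_ge0.
exists B => _ [N _ <-]; rewrite /series /=.
by have := u_sum N.+1; rewrite big_add1.
Qed.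

End TelescopingSeries.

Lemma subset_chain_stabilizes (T : finType) (A : nat -> {set T}) N :
  (forall k, (N <= k)%N -> A k \subset A k.+1) ->
  exists K, forall k, (K <= k)%N -> A k = A K.
Proof.
move=> A_sub.
have A_mono : {in [pred k | N <= k]%N &, {homo A : i j / (i <= j)%N >-> i \subset j}}.
  apply: homo_leq_in => [X|Y X Z|i j|i]; rewrite ?inE.
  - exact: subxx.
  - exact: fintype.subset_trans.
  - by move=> Ni _ k /andP[/ltnW /(leq_trans Ni)].
  - by move=> /A_sub.
pose P m := `[< exists2 k, (N <= k)%N & #|A k| = m >].
have P_ex : exists m, P m by exists #|A N|; apply/asboolP; exists N.
have P_ub m : P m -> (m <= #|T|)%N by move=> /asboolP[k _ <-]; exact: max_card.
case: (ex_maxnP P_ex P_ub) => _ /asboolP[K NK <-] K_max.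
exists K => k Kk; apply/eqP; rewrite eq_sym eqEcard A_mono ?inE ?(leq_trans NK) //=.
by apply: K_max; apply/asboolP; exists k => //; exact: leq_trans Kk.
Qed.

Section VMEPIHTIterates.
Context {R : realType} {n : nat} {f : 'rV[R]_n -> R} {g : 'rV[R]_n -> 'rV[R]_n}.
Context {L mu lam m : R} {x y : nat -> 'rV[R]_n} {Hm : nat -> 'M[R]_n} {alpha : nat -> R}.
Hypotheses (f_grad : is_gradient f g) (L_gt0 : 0 < L) (g_lip : lipschitz_with g L).
Hypotheses (mu_gt0 : 0 < mu) (lam_gt0 : 0 < lam) (f_ge : forall z, m <= f z).
Hypothesis iter : VMEPIHT f g L mu lam x y Hm alpha.

Lemma Hobj_ge z : m <= Hobj f lam z.
Proof. by rewrite /Hobj -[m]addr0 lerD // mulr_ge0 // ltW. Qed.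

Lemma Hobj_sufficient_decrease k :
  Hobj f lam (x k.+1) + mu / 2 * nsq (x k.+1 - y k.+1) <= Hobj f lam (x k).
Proof.
have [_ [_ [_ [[y_supp _] fy_le]]]] := iter k.
have [x_min _] := iter k.+1.
have := x_min (y k.+1); rewrite -subr_le0 xobj_subr_center //.
have := descent_lemma f_grad L_gt0 g_lip (x k.+1) (y k.+1).
have : lam * (norm0 (y k.+1))%:R <= lam * (norm0 (x k))%:R.
  by rewrite ler_pM2l // ler_nat norm0_le_of_C_I.
rewrite /Hobj; lra.
Qed.

Lemma Hobj_nonincreasing k : Hobj f lam (x k.+1) <= Hobj f lam (x k).
Proof.
have := Hobj_sufficient_decrease k; have := nsq_ge0 (x k.+1 - y k.+1).
have : 0 < mu / 2 by rewrite divr_gt0.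
nra.
Qed.

Lemma gap_partial_sums_le N :
  \sum_(1 <= k < N) nsq (x k - y k) <= 2 / mu * (Hobj f lam (x 0%N) - m).
Proof.
have two_mu_gt0 : 0 < 2 / mu by rewrite divr_gt0.
rewrite mulrBr.
apply: (@telescoping_partial_sums_le _ _ (fun k => 2 / mu * Hobj f lam (x k))) => k.
  rewrite -mulrBr -(invf_div mu 2) ler_pdivlMl ?divr_gt0 //.
  by have := Hobj_sufficient_decrease k; lra.
by rewrite ler_pM2l // Hobj_ge.
Qed.

Lemma gap_cvg0 : (fun k => enorm (x k - y k)) @ \oo --> 0.
Proof.
rewrite -sqrtr0; apply: continuous_cvg; first exact: sqrt_continuous.
by apply: cvg0_of_partial_sums_le gap_partial_sums_le => k; exact: nsq_ge0.
Qed.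

Lemma Iset_eventually_subset :
  exists N, forall k, (N <= k)%N -> Iset (x k) \subset Iset (x k.+1).
Proof.
have delta_gt0 : 0 < lam / (L + mu) by rewrite divr_gt0 ?addr_gt0.
have [|N _ gapN] := cvgr0_norm_lt _ gap_cvg0 (Num.sqrt (lam / (L + mu))).
  by rewrite sqrtr_gt0.
exists N => k Nk; apply/fintype.subsetP => i; rewrite !inE => /eqP xi0.
have [_ [_ [_ [[y_supp _] _]]]] := iter k.
have yi0 : y k.+1 0 i = 0 by apply: y_supp; rewrite inE xi0.
have small : x k.+1 0 i ^+ 2 < lam / (L + mu).
  rewrite -ltr_sqrt // sqrtr_sqr.
  have := abs_entry_le_enorm (x k.+1 - y k.+1) i; rewrite !mxE yi0 subr0 => /le_lt_trans.
  by apply; have := gapN k.+1 (leqW Nk); rewrite /= ger0_norm ?enorm_ge0.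
apply: contraTT small => /(xobj_argmin_entry_sqr_ge L_gt0 mu_gt0 _ _ i (iter k.+1).1).
by rewrite -leNgt.
Qed.

End VMEPIHTIterates.

Theorem lemma4 (R : realType) (n : nat) (f : 'rV[R]_n -> R) (g : 'rV[R]_n -> 'rV[R]_n)
  (L mu lam : R) (x y : nat -> 'rV[R]_n) (Hm : nat -> 'M[R]_n) (alpha : nat -> R) :
  convex_fun f ->
  is_gradient f g ->
  (exists m : R, forall z, m <= f z) ->
  0 < L -> lipschitz_with g L ->
  0 < mu -> 0 < lam ->
  VMEPIHT f g L mu lam x y Hm alpha ->
  (forall k, Hobj f lam (x k.+1) <= Hobj f lam (x k)) /\
  ((\sum_(1 <= k <oo) (nsq (x k - y k))%:E < +oo)%E /\
   (fun k => enorm (x k - y k)) @ \oo --> (0 : R)) /\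
  (exists K : nat, forall k, (K <= k)%N -> Iset (x k) = Iset (x K)).
Proof.
move=> _ f_grad [m f_ge] L_gt0 g_lip mu_gt0 lam_gt0 iter.
have gap_sums := gap_partial_sums_le f_grad L_gt0 g_lip mu_gt0 lam_gt0 f_ge iter.
have [N Iset_sub] := Iset_eventually_subset f_grad L_gt0 g_lip mu_gt0 lam_gt0 f_ge iter.
split; first exact: (Hobj_nonincreasing f_grad L_gt0 g_lip mu_gt0 lam_gt0 iter).
split; first split.
- by apply: nneseries_lty_of_partial_sums_le gap_sums => k; exact: nsq_ge0.
- exact: (gap_cvg0 f_grad L_gt0 g_lip mu_gt0 lam_gt0 f_ge iter).
- exact: subset_chain_stabilizes Iset_sub.
Qed.
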